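(* Let $\mathcal T$ be a finite tree with $|\mathcal T|$ vertices. Then for all $n\ge1$, \[ h_n(W(\mathcal T))\le n^{2|\mathcal T|}\cdot 4^{|\mathcal T| n}\cdot n^{\gamma(\mathcal T) n}. \]
   Context: $W(\mathcal T)$ is the right-angled Coxeter group of $\mathcal T$: generators $\sigma_v$ for the vertices, relations $\sigma_v^2=1$, and $\sigma_v\sigma_w=\sigma_w\sigma_v$ for adjacent $v,w$. $h_n(\Gamma)=|\mathrm{Hom}(\Gamma,\mathrm{Sym}_n)|$. A clique collection is an induced subgraph whose connected components are complete graphs. For components $\mathcal C_1,\dots,\mathcal C_q$ set $w(\mathcal C)=\sum_i(1-2^{-|\mathcal C_i|})$. Then $\gamma(\mathcal T)$ is the maximum of $w$ over all clique collections of $\mathcal T$. *)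

From HB Require Import structures.
From mathcomp Require Import all_boot all_order all_algebra all_fingroup.
From mathcomp Require Import all_classical all_reals all_analysis.
Set Implicit Arguments. Unset Strict Implicit. Unset Printing Implicit Defensive.
Import Order.TTheory GRing.Theory Num.Theory.
Local Open Scope ring_scope.

Definition simple_graph (T : finType) (e : rel T) : Prop :=
  symmetric e /\ irreflexive e.

Definition acyclic_graph (T : finType) (e : rel T) : Prop :=
  forall (x : T) (p : seq T),
    path e x p -> uniq (x :: p) -> (2 <= size p)%N -> ~~ e (last x p) x.

Definition is_tree (T : finType) (e : rel T) : Prop :=
  [/\ simple_graph e, (0 < #|T|)%N, (forall x y, connect e x y) & acyclic_graph e].

(* h_n(W(T)) = |Hom(W(T), Sym_n)|: by the presentation of the right-angled
   Coxeter group, homomorphisms correspond exactly to assignments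
   v |-> s_v in Sym_n with s_v^2 = 1 and s_v s_w = s_w s_v for adjacent v,w. *)
Definition hom_RACG_Sym (T : finType) (e : rel T) (n : nat) : nat :=
  #|[set f : {ffun T -> {perm 'I_n}} |
      [forall v, (f v * f v == 1)%g] &&
      [forall v, forall w, e v w ==> (f v * f w == f w * f v)%g]]|.

Definition induced_rel (T : finType) (e : rel T) (S : {set T}) : rel T :=
  fun x y => [&& x \in S, y \in S & e x y].

Definition induced_components (T : finType) (e : rel T) (S : {set T})
  : {set {set T}} :=
  [set [set y in S | connect (induced_rel e S) x y] | x in S].

Definition clique_collection (T : finType) (e : rel T) (S : {set T}) : bool :=
  [forall C in induced_components e S,
     forall x in C, forall y in C, (x != y) ==> e x y].

Definition clique_weight (R : realType) (T : finType) (e : rel T)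
  (S : {set T}) : R :=
  \sum_(C in induced_components e S) (1 - (2%:R ^- #|C|)).

(* gamma(T): max of w over all clique collections (the empty set is one,
   with weight 0, and all weights are >= 0, so 0 is a harmless base value). *)
Definition gammaT (R : realType) (T : finType) (e : rel T) : R :=
  \big[Num.max/0]_(S : {set T} | clique_collection e S) clique_weight R e S.

From mathcomp Require Import all_boot all_order all_algebra all_fingroup.
From mathcomp Require Import reals exp.
From mathcomp Require Import ring lra zify.
Import Order.TTheory GRing.Theory Num.Theory.
Set Implicit Arguments. Unset Strict Implicit. Unset Printing Implicit Defensive.

(* Root T; then t = f v commutes with s = f (parent v),
   and the orbits of <s, t> on which t is neither trivial nor equal to s have
   2 points if s fixes them and 4 otherwise.  So t is determined by s, the
   set where t = s, the least points of these orbits and the values of t on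
   them, and there are at most 4^(|T| n) n^K homomorphisms, K bounding the
   total number of such orbit representatives.  Comparing the points fixed
   by f (parent v) with those moved by f v gives K <= n/4 sum_v (2 - b v),
   where b v is the number of light children of v.  Finally, alternate
   vertices of the chains formed by light vertices make up a clique
   collection of isolated vertices and edges of weight at least
   sum_v (2 - b v) / 4, whence K <= gamma(T) n. *)

Lemma card_sigma_set (I X : finType) (P : {pred I}) (A : I -> {set X}) :
  #|[set p : I * X | (p.1 \in P) && (p.2 \in A p.1)]| = \sum_(i in P) #|A i|.
Proof.
transitivity (\sum_(i in P) \sum_(x in A i) 1); last by apply: eq_bigr => i _; rewrite sum1_card.
by rewrite -sum1_card pair_big_dep; apply: eq_bigl => p; rewrite inE.
Qed.

(** * Pairs of commuting involutions *)

Definition fixed (X : finType) (p : {perm X}) : {set X} := [set x | p x == x].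

Lemma fixed1 (X : finType) : fixed (1 : {perm X}) = [set: X].
Proof. by apply/setP => x; rewrite !inE perm1 eqxx. Qed.

Section KleinOrbits.
Variables (n : nat) (s t : {perm 'I_n}).

Definition klein_orbit (x : 'I_n) : seq 'I_n := [:: x; s x; t x; s (t x)].

(* The least elements of the orbits of <s, t> on which t is neither the
   identity nor equal to s; such an orbit has 2 points if s fixes it and 4
   otherwise. *)
Definition klein_reps : {set 'I_n} :=
  [set x | [&& t x != x, t x != s x & all (fun y : 'I_n => x <= y) (klein_orbit x)]].

Definition agree_set : {set 'I_n} := [set x | t x == s x].

Hypotheses (sK : involutive s) (tK : involutive t) (st : forall x, t (s x) = s (t x)).

Lemma klein_orbit_eq y z : z \in klein_orbit y -> klein_orbit z =i klein_orbit y.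
Proof.
rewrite !inE => /or4P [] /eqP -> w; rewrite !inE ?sK ?tK ?st ?sK ?tK //;
  by case: (w == s y); case: (w == y); case: (w == s (t y)); case: (w == t y).
Qed.

Lemma klein_orbit_free y z : t y != y -> t y != s y -> z \in klein_orbit y ->
  (t z != z) && (t z != s z).
Proof.
move=> tyy tys; rewrite !inE => /or4P [] /eqP ->; rewrite ?st ?sK ?tK;
  apply/andP; split; apply/eqP => E.
- by move/eqP: tyy.
- by move/eqP: tys.
- by move/eqP: tyy; apply; apply: (@perm_inj _ s).
- by move/eqP: tys; apply; rewrite -[t y]sK E.
- by move/eqP: tyy; rewrite -E.
- by move/eqP: tys; apply; rewrite -[t y]sK -E.
- by move/eqP: tyy; apply; apply: (@perm_inj _ s).
- by move/eqP: tys; rewrite -E.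
Qed.

Lemma klein_rep_unique x x' z : x \in klein_reps -> x' \in klein_reps ->
  z \in klein_orbit x -> z \in klein_orbit x' -> x = x'.
Proof.
move=> + + zx zx'; rewrite !inE => /and3P [_ _ /allP xmin] /and3P [_ _ /allP x'min].
have Ex := klein_orbit_eq zx; have Ex' := klein_orbit_eq zx'.
apply/val_inj/eqP; rewrite eqn_leq xmin ?x'min //.
- by rewrite -Ex' Ex inE eqxx.
- by rewrite -Ex Ex' inE eqxx.
Qed.

Lemma klein_rep_exists y : t y != y -> t y != s y ->
  exists2 x, x \in klein_reps & y \in klein_orbit x.
Proof.
move=> tyy tys.
have [|x yx xmin] := @arg_minnP _ y (fun w => w \in klein_orbit y) val.
  by rewrite inE eqxx.
exists x; last by rewrite (klein_orbit_eq yx) inE eqxx.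
rewrite inE andbA (klein_orbit_free tyy tys yx); apply/allP => w.
by rewrite (klein_orbit_eq yx) => /xmin.
Qed.

Lemma commute_moved x : s x != x -> s (t x) != t x.
Proof. by apply: contra => /eqP E; rewrite -st in E; apply/eqP/(perm_inj E). Qed.

Lemma sum_card_klein_orbits (A B : {set 'I_n}) :
  A \subset klein_reps -> {in A, forall x, [set y in klein_orbit x] \subset B} ->
  \sum_(x in A) #|[set y in klein_orbit x]| <= #|B|.
Proof.
move=> /subsetP AR AB.
set P := [set p : 'I_n * 'I_n | (p.1 \in A) && (p.2 \in [set y in klein_orbit p.1])].
have snd_inj : {in P &, injective snd}.
  move=> [x y] [x' y'] /[!in_set] /= /andP [xA yx] /andP [x'A y'x'] yy'.
  by rewrite -yy' in y'x'; rewrite (klein_rep_unique (AR _ xA) (AR _ x'A) yx y'x') yy'.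
rewrite -card_sigma_set -(card_in_imset snd_inj); apply/subset_leq_card/subsetP.
by move=> _ /imsetP [[x y] /[!in_set] /andP [xA yx] ->]; apply: (subsetP (AB x xA)); rewrite inE.
Qed.

Lemma card_klein_orbit_fixed x :
  x \in klein_reps -> s x = x -> #|[set y in klein_orbit x]| = 2.
Proof.
rewrite inE => /and3P [tx1 _ _] sx.
have -> : [set y in klein_orbit x] = [set x; t x].
  by apply/setP => y; rewrite !inE -st sx; case: (y == x); case: (y == t x).
by rewrite cards2 eq_sym tx1.
Qed.

Lemma card_klein_orbit_moved x :
  x \in klein_reps -> s x != x -> #|[set y in klein_orbit x]| = 4.
Proof.
rewrite inE => /and3P [tx1 txs _] sx1.
have x_stx : x != s (t x).
  by apply: contraNneq txs => E; rewrite {2}E sK.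
have sx_stx : s x != s (t x) by rewrite (inj_eq perm_inj) eq_sym.
rewrite cardsE (card_uniqP _) //= !inE !negb_or.
by rewrite eq_sym sx1 eq_sym tx1 x_stx eq_sym txs sx_stx eq_sym commute_moved.
Qed.

Lemma klein_orbit_fixed x : s x = x -> [set y in klein_orbit x] \subset fixed s.
Proof.
move=> sx; apply/subsetP => y; rewrite !inE -st sx.
by case/or4P => /eqP ->; rewrite -?st sx.
Qed.

Lemma klein_orbit_moved x : s x != x -> [set y in klein_orbit x] \subset ~: fixed s.
Proof.
move=> sx1; apply/subsetP => y; rewrite !inE => /or4P [] /eqP ->; rewrite ?sK //.
- by rewrite eq_sym.
- exact: commute_moved.
- by rewrite eq_sym commute_moved.
Qed.

Lemma klein_rep_orbit_moved x :
  x \in klein_reps -> [set y in klein_orbit x] \subset ~: fixed t.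
Proof.
rewrite inE => /and3P [tx1 txs _]; apply/subsetP => y; rewrite !in_set.
by move=> /(klein_orbit_free tx1 txs) /andP [].
Qed.

Lemma card_klein_reps :
  [/\ 2 * #|klein_reps :&: fixed s| <= #|fixed s|,
      4 * #|klein_reps :\: fixed s| <= #|~: fixed s| &
      2 * #|klein_reps :&: fixed s| + 4 * #|klein_reps :\: fixed s| <= #|~: fixed t|].
Proof.
have sum2 : \sum_(x in klein_reps :&: fixed s) #|[set y in klein_orbit x]| =
            2 * #|klein_reps :&: fixed s|.
  rewrite mulnC -sum_nat_const; apply: eq_bigr => x /setIP [xR].
  by rewrite inE => /eqP; apply: card_klein_orbit_fixed.
have sum4 : \sum_(x in klein_reps :\: fixed s) #|[set y in klein_orbit x]| =
            4 * #|klein_reps :\: fixed s|.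
  rewrite mulnC -sum_nat_const; apply: eq_bigr => x /setDP [xR].
  by rewrite inE; apply: card_klein_orbit_moved.
split.
- rewrite -sum2; apply: sum_card_klein_orbits => [|x /setIP [_]]; first exact: subsetIl.
  by rewrite inE => /eqP; apply: klein_orbit_fixed.
- rewrite -sum4; apply: sum_card_klein_orbits => [|x /setDP [_]]; first exact: subsetDl.
  by rewrite inE; apply: klein_orbit_moved.
- rewrite -sum2 -sum4 -big_setID; apply: sum_card_klein_orbits => // x.
  exact: klein_rep_orbit_moved.
Qed.

End KleinOrbits.

Section KleinDetermined.
Variables (n : nat) (s t t' : {perm 'I_n}).
Hypotheses (sK : involutive s) (tK : involutive t) (tK' : involutive t')
  (st : forall x, t (s x) = s (t x)) (st' : forall x, t' (s x) = s (t' x)).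

Lemma klein_orbit_agree x y : t x = t' x -> y \in klein_orbit s t x -> t y = t' y.
Proof.
move=> E; rewrite !inE => /or4P [] /eqP ->.
- exact: E.
- by rewrite st st' E.
- by rewrite tK E tK'.
- by rewrite st tK E st' tK'.
Qed.

Lemma involution_eq_on_klein_reps :
  klein_reps s t = klein_reps s t' -> agree_set s t = agree_set s t' ->
  {in klein_reps s t, t =1 t'} -> t = t'.
Proof.
move=> ER EA Et; apply/permP => y.
have [/andP [ty1 tys] | free_t] := boolP ((t y != y) && (t y != s y)).
  have [x xR yx] := klein_rep_exists sK tK st ty1 tys.
  exact: (klein_orbit_agree (Et x xR) yx).
have [/andP [t'y1 t'ys] | free_t'] := boolP ((t' y != y) && (t' y != s y)).
  have [x xR yx] := klein_rep_exists sK tK' st' t'y1 t'ys.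
  rewrite -ER in xR; have E := Et x xR.
  by apply: (klein_orbit_agree E); rewrite /klein_orbit E.
have EAy : (t y == s y) = (t' y == s y) by move/setP/(_ y): EA; rewrite !inE.
have [tys | tys] := eqVneq (t y) (s y).
  by move: EAy; rewrite tys eqxx => /esym/eqP ->.
move: EAy free_t free_t'; rewrite (negbTE tys) => /esym t'ys.
by rewrite !negb_and !negbK t'ys !orbF => /eqP -> /eqP ->.
Qed.

End KleinDetermined.

(** * Rooted trees *)

Section RootedTree.
Variables (T : finType) (e : rel T) (r : T).
Hypotheses (e_sym : symmetric e) (e_irr : irreflexive e)
  (e_conn : forall x y, connect e x y) (e_acyc : acyclic_graph e).

Definition ball k := iter k (fun A => A :|: [set y | [exists x in A, e x y]]) [set r].

Lemma ballS k : ball k.+1 = ball k :|: [set y | [exists x in ball k, e x y]].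
Proof. by []. Qed.

Lemma ball_edge k x y : x \in ball k -> e x y -> y \in ball k.+1.
Proof. by move=> xk exy; rewrite ballS !inE; apply/orP; right; apply/existsP; exists x; rewrite xk. Qed.

Lemma subset_ball k m : k <= m -> ball k \subset ball m.
Proof.
move=> /subnKC <-; elim: (m - k) => [|d IH]; first by rewrite addn0.
by rewrite addnS ballS (subset_trans IH) // subsetUl.
Qed.

Lemma ball_path k x p : x \in ball k -> path e x p -> last x p \in ball (k + size p).
Proof.
elim: p x k => [|y p IH] x k xk /=; first by rewrite addn0.
by case/andP => exy py; rewrite addnS -addSn; apply: IH py; apply: ball_edge exy.
Qed.

Lemma mem_ball_card v : v \in ball #|T|.
Proof.
have /connectP [p pp ->] := e_conn r v.
have [p' pp' up' _] := shortenP pp.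
have size_p' : size p' <= #|T|.
  by have := max_card (mem (r :: p')); rewrite (card_uniqP up') => /ltnW.
apply: (subsetP (subset_ball size_p')).
by have := ball_path (p := p') (_ : r \in ball 0) pp'; rewrite add0n; apply; rewrite inE.
Qed.

Definition depth v := find (fun k => v \in ball k) (iota 0 #|T|.+1).

Lemma depth_le_card v : depth v <= #|T|.
Proof.
rewrite -ltnS -[X in _ < X](size_iota 0) -has_find.
by apply/hasP; exists #|T|; rewrite ?mem_iota ?add0n ?ltnSn ?mem_ball_card.
Qed.

Lemma depth_ball v : v \in ball (depth v).
Proof.
have := depth_le_card v; rewrite -ltnS => lt_d.
have := @nth_find _ 0 (fun k => v \in ball k) (iota 0 #|T|.+1).
by rewrite nth_iota // add0n; apply; rewrite has_find size_iota.
Qed.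

Lemma depth_min v k : v \in ball k -> depth v <= k.
Proof.
move=> vk; case: (leqP k #|T|) => [le_k | /ltnW]; last exact/leq_trans/depth_le_card.
rewrite leqNgt; apply/negP => /(before_find 0).
by rewrite nth_iota ?ltnS // add0n vk.
Qed.

Lemma depth0 v : depth v = 0 -> v = r.
Proof. by move=> dv; have := depth_ball v; rewrite dv inE => /eqP. Qed.

Lemma depth_edge x y : e x y -> depth y <= (depth x).+1.
Proof. by move=> exy; apply/depth_min/ball_edge/exy/depth_ball. Qed.

Definition parent v :=
  if v == r then r else odflt r [pick x | e x v && (depth x < depth v)].

Lemma parentP v : v != r -> e (parent v) v /\ (depth (parent v)).+1 = depth v.
Proof.
move=> vr; rewrite /parent (negbTE vr).
case: pickP => [x /andP [exv dx] | no_parent] /=.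
  by split=> //; apply/eqP; rewrite eqn_leq dx depth_edge.
have := depth_ball v; case Ed: (depth v) => [|k]; first by rewrite (depth0 Ed) eqxx in vr.
rewrite ballS !inE => /orP [/depth_min | /existsP [x /andP [xk exv]]].
  by rewrite Ed ltnn.
by have := no_parent x; rewrite exv Ed ltnS depth_min.
Qed.

Lemma parent_edge v : v != r -> e (parent v) v.
Proof. by case/parentP. Qed.

Lemma depth_parent v : v != r -> (depth (parent v)).+1 = depth v.
Proof. by case/parentP. Qed.

Lemma root_ind (P : T -> Prop) :
  P r -> (forall v, v != r -> P (parent v) -> P v) -> forall v, P v.
Proof.
move=> Pr IH v; have : depth v <= depth v by [].
elim: (depth v) {-2}v => [|k IHk] w dw.
  by rewrite leqn0 in dw; rewrite (depth0 (eqP dw)).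
have [-> // | wr] := eqVneq w r.
by apply: (IH _ wr); apply: IHk; rewrite -ltnS depth_parent.
Qed.

Definition child u v := (u != r) && (parent u == v).

Lemma depth_child u v : child u v -> depth u = (depth v).+1.
Proof. by case/andP => ur /eqP <-; rewrite depth_parent. Qed.

(* Otherwise the edge would close a cycle with the path from y to x through
   parent edges. *)
Lemma edge_child x y : e x y -> child x y || child y x.
Proof.
pose c := [rel a b | child a b || child b a].
have c_sym : symmetric c by move=> a b; rewrite /= orbC.
have c_root v : connect c v r.
  elim/root_ind: v => [|v vr]; first exact: connect0.
  by apply/connect_trans/connect1; rewrite /= /child vr eqxx.
move=> exy; have /connectP [p cp y_last] : connect c x y.
  by rewrite (connect_trans (c_root x)) // (sym_connect_sym c_sym) c_root.
move: exy; rewrite y_last; case: (shortenP cp) => p' cp' up' _.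
case: p' cp' up' => [|z [|w p']] cp' up' /= exy.
- by rewrite e_irr in exy.
- by move: cp'; rewrite /= andbT.
- have c_e : subrel c e.
    by move=> a b /orP [] /andP [ar /eqP <-]; [rewrite e_sym |]; apply: parent_edge.
  by have := e_acyc (sub_path c_e cp') up' isT; rewrite e_sym exy.
Qed.

(** * Chains of light vertices *)

(* A vertex is light when at most one of its children is light, so the light
   vertices form vertical chains; [picked] marks every other vertex of such a
   chain, starting from its bottom.  Both are computed with fuel [k], which is
   enough once [k] exceeds the height of the tree. *)
Fixpoint light_iter k v : nat * bool :=
  if k is k'.+1 then
    let L := [set u | child u v && ((light_iter k' u).1 <= 1)] in
    (#|L|, (#|L| == 0) || ((#|L| == 1) && [forall u in L, ~~ (light_iter k' u).2]))
  else (0, true).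

Lemma light_iter_stable k v : #|T| < depth v + k -> light_iter k.+1 v = light_iter k v.
Proof.
elim: k v => [|k IH] v lt_T; first by rewrite addn0 ltnNge depth_le_card in lt_T.
have E u : child u v -> light_iter k.+1 u = light_iter k u.
  by move=> cu; apply: IH; rewrite (depth_child cu) addSn -addnS.
have EL : [set u | child u v && ((light_iter k.+1 u).1 <= 1)] =
          [set u | child u v && ((light_iter k u).1 <= 1)].
  by apply/setP => u; rewrite !inE; case cu: (child u v) => //; rewrite E.
have EF : [forall u in [set u | child u v && ((light_iter k u).1 <= 1)],
             ~~ (light_iter k.+1 u).2] =
          [forall u in [set u | child u v && ((light_iter k u).1 <= 1)],
             ~~ (light_iter k u).2].
  by apply: eq_forallb_in => u; rewrite inE => /andP [cu _]; rewrite E.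
by rewrite [LHS]/= EL EF.
Qed.

Definition nlight v := (light_iter #|T|.+1 v).1.
Definition picked v := (light_iter #|T|.+1 v).2.
Definition light_children v := [set u | child u v && (nlight u <= 1)].

Lemma light_iter_unfold v : light_iter #|T|.+1 v = light_iter #|T|.+2 v.
Proof. by rewrite [RHS]light_iter_stable // addnS ltnS leq_addl. Qed.

Lemma nlightE v : nlight v = #|light_children v|.
Proof. by rewrite /nlight light_iter_unfold. Qed.

Lemma pickedE v : picked v =
  (nlight v == 0) || ((nlight v == 1) && [forall u in light_children v, ~~ picked u]).
Proof. by rewrite /picked light_iter_unfold nlightE. Qed.

Lemma sum_nlight (F : T -> nat) :
  \sum_v (if (v != r) && (nlight v <= 1) then F (parent v) else 0) =
  \sum_v nlight v * F v.
Proof.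
rewrite -big_mkcond /= (partition_big parent predT) //=.
apply: eq_bigr => w _; rewrite nlightE -sum_nat_const.
apply: eq_big => [v | v /andP [_ /eqP -> //]].
by rewrite !inE /child; case: (v != r); case: (nlight v <= 1); case: (parent v == w).
Qed.

(* Per vertex, 4 (j v + i v) + m (parent v) <= n (2 - nlight v) + nlight v * m v,
   where the term m (parent v) is present only for light v != r; by
   [sum_nlight] these terms cancel in the sum.  Note that 2 - nlight v is
   truncated: vertices with at least two light children contribute 0. *)
Lemma sum_le_deficit (n : nat) (m j i : T -> nat) :
  (forall v, m v <= n) ->
  (forall v, v != r -> [/\ 2 * j v + m (parent v) <= n, 4 * i v <= m (parent v)
                         & 2 * j v + 4 * i v <= m v]) ->
  i r = 0 -> 2 * j r <= m r ->
  4 * \sum_v (j v + i v) <= n * \sum_v (2 - nlight v).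
Proof.
move=> m_le jim i_r j_r.
have local v : 4 * (j v + i v) + (if (v != r) && (nlight v <= 1) then m (parent v) else 0)
               <= n * (2 - nlight v) + nlight v * m v.
  have := m_le v; have [-> | vr] /= := eqVneq v r.
    by rewrite i_r; case: (nlight r) => [|[|b]]; nia.
  by have [] := jim v vr; case: (nlight v) => [|[|b]] /=; nia.
have := @leq_sum _ (index_enum T) xpredT _ _ (fun v _ => local v).
by rewrite !big_split /= sum_nlight -big_distrr /= leq_add2r; lia.
Qed.

Definition chain_top v := (v == r) || (1 < nlight (parent v)).
Definition chain_set := [set v | (nlight v <= 1) && (picked v || chain_top v)].
Definition chain_nbr x := [exists y in chain_set, e x y].

Lemma chain_set_light v : v \in chain_set -> nlight v <= 1.
Proof. by rewrite inE => /andP []. Qed.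

Lemma mem_chain_set_child u v : child u v -> nlight v <= 1 ->
  (u \in chain_set) = (nlight u <= 1) && picked u.
Proof.
move=> /andP [ur /eqP pu] lv; rewrite inE /chain_top (negbTE ur) pu /=.
by rewrite ltnNge lv orbF.
Qed.

Lemma picked_light_child v u : picked v -> u \in light_children v -> ~~ picked u.
Proof.
rewrite pickedE nlightE cards_eq0 => /orP [/eqP -> | /andP [_ /forall_inP]]; last exact.
by rewrite inE.
Qed.

Lemma unpicked_light v : nlight v <= 1 -> ~~ picked v ->
  exists u, [/\ child u v, nlight u <= 1, picked u & light_children v = [set u]].
Proof.
move=> lv; rewrite pickedE negb_or negb_and => /andP [nl0 unpicked].
have nl1 : nlight v == 1 by move: lv nl0; case: (nlight v) => [|[|]].
move: unpicked; rewrite nl1 /= negb_forall_in => /existsP [w /andP [wL /negPn pw]].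
have /cards1P [u Lu] : #|light_children v| == 1 by rewrite -nlightE.
move: wL; rewrite Lu inE => /eqP wu; subst w.
have : u \in light_children v by rewrite Lu set11.
by rewrite inE => /andP [cu lu]; exists u.
Qed.

Lemma picked_no_chain_child x y :
  x \in chain_set -> picked x -> child y x -> y \notin chain_set.
Proof.
move=> xS px cy; rewrite (mem_chain_set_child cy (chain_set_light xS)).
apply/negP => /andP [ly py].
have yL : y \in light_children x by rewrite inE cy ly.
by rewrite (negbTE (picked_light_child px yL)) in py.
Qed.

Lemma picked_chain_nbr x : x \in chain_set -> picked x ->
  chain_nbr x = (x != r) && (parent x \in chain_set).
Proof.
move=> xS px; apply/existsP/idP => [[y /andP [yS exy]] | /andP [xr pS]].
  case/orP: (edge_child exy) => /andP [xr /eqP pxy]; first by rewrite xr pxy.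
  have cy : child y x by rewrite /child xr pxy eqxx.
  by rewrite (negbTE (picked_no_chain_child xS px cy)) in yS.
by exists (parent x); rewrite pS e_sym parent_edge.
Qed.

Lemma chain_set_deg x : x \in chain_set -> #|[set y in chain_set | e x y]| <= 1.
Proof.
move=> xS; have [px | upx] := boolP (picked x).
  rewrite -(cards1 (parent x)); apply/subset_leq_card/subsetP => y /setIdP [yS exy].
  case/orP: (edge_child exy) => /andP [xr /eqP pxy]; first by rewrite pxy set11.
  have cy : child y x by rewrite /child xr pxy eqxx.
  by rewrite (negbTE (picked_no_chain_child xS px cy)) in yS.
apply: leq_trans (chain_set_light xS); rewrite nlightE.
apply/subset_leq_card/subsetP => y /setIdP [yS exy].
case/orP: (edge_child exy) => /andP [xr /eqP px_y].
  move: xS; rewrite inE (negbTE upx) /chain_top (negbTE xr) px_y /=.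
  by rewrite ltnNge (chain_set_light yS) andbF.
by rewrite inE (chain_set_light yS) andbT /child xr px_y eqxx.
Qed.

(* A vertex of [chain_set] gets 8 times its share of the clique weight: 3 if
   it has a neighbour in [chain_set], 4 otherwise.  To see that this pays
   2 (2 - nlight v) for every vertex, a light vertex that is not the top of
   its chain receives [transfer v] from its parent. *)
Definition tokens x := if x \in chain_set then (if chain_nbr x then 3 else 4) else 0.
Definition transfer x := if x \in chain_set then (if chain_nbr x then 1 else 0) else 2.

Lemma chain_top_isolated v : v \in chain_set -> picked v -> chain_top v -> ~~ chain_nbr v.
Proof.
move=> vS pv; rewrite (picked_chain_nbr vS pv) /chain_top => /orP [/eqP -> | heavy].
  by rewrite eqxx.
by rewrite andbC; apply/negP => /andP [/chain_set_light]; rewrite leqNgt heavy.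
Qed.

Lemma tokens_local v : nlight v <= 1 ->
  2 * (2 - nlight v) + \sum_(u in light_children v) transfer u <=
  tokens v + (if chain_top v then 0 else transfer v).
Proof.
move=> lv; have [pv | upv] := boolP (picked v).
  have vS : v \in chain_set by rewrite inE lv pv.
  have -> : \sum_(u in light_children v) transfer u = \sum_(u in light_children v) 2.
    apply: eq_bigr => u uL; have := uL; rewrite inE => /andP [cu lu].
    by rewrite /transfer (mem_chain_set_child cu lv) lu (negbTE (picked_light_child pv uL)).
  rewrite sum_nat_const -nlightE /tokens /transfer vS.
  case: (boolP (chain_top v)) => [tv | _].
    by rewrite (negbTE (chain_top_isolated vS pv tv)); move: lv; case: (nlight v) => [|[|]].
  by case: (chain_nbr v); move: lv; case: (nlight v) => [|[|]].
have [u [cu lu pu Lu]] := unpicked_light lv upv.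
have uS : u \in chain_set by rewrite (mem_chain_set_child cu lv) lu pu.
have u_nbr : chain_nbr u = (v \in chain_set).
  by rewrite (picked_chain_nbr uS pu); case/andP: cu => -> /eqP ->.
rewrite Lu big_set1 nlightE Lu cards1 /tokens /transfer uS u_nbr.
case: (boolP (chain_top v)) => tv.
  have vS : v \in chain_set by rewrite inE lv tv orbT.
  have -> : chain_nbr v.
    by apply/existsP; exists u; case/andP: cu => ur /eqP <-; rewrite uS parent_edge.
  by rewrite vS.
by rewrite inE (negbTE upv) (negbTE tv) andbF.
Qed.

Lemma sum_transfer_children :
  \sum_(v | nlight v <= 1) \sum_(u in light_children v) transfer u =
  \sum_(v | nlight v <= 1) (if chain_top v then 0 else transfer v).
Proof.
rewrite (exchange_big_dep (fun u => nlight u <= 1)) /=; last first.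
  by move=> v u _; rewrite inE => /andP [].
apply: eq_bigr => u lu; rewrite /chain_top.
have [-> | ur] /= := eqVneq u r.
  by apply: big1 => v; rewrite inE /child eqxx andbF.
rewrite ltnNge; have [lp | hp] /= := boolP (nlight (parent u) <= 1).
  rewrite (big_pred1 (parent u)) // => v /=; rewrite inE /child ur lu /= eq_sym andbC.
  by case: eqP => // ->.
by apply: big1 => v; rewrite inE /child ur lu /= andbT => /andP [lv /eqP pv]; rewrite pv lv in hp.
Qed.

Lemma deficit_le_tokens : 2 * \sum_v (2 - nlight v) <= \sum_v tokens v.
Proof.
rewrite big_distrr /= (bigID (fun v => nlight v <= 1)) /=.
rewrite [X in _ <= X](bigID (fun v => nlight v <= 1)) /=.
rewrite [X in _ + X <= _]big1 ?addn0 => [|v]; last by rewrite -ltnNge; case: (nlight v) => [|[|]].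
apply: leq_trans (leq_addr _ _).
rewrite -(leq_add2r (\sum_(v | nlight v <= 1) (if chain_top v then 0 else transfer v))).
rewrite -{1}sum_transfer_children -!big_split /=.
by apply: leq_sum => v; apply: tokens_local.
Qed.

End RootedTree.

(** * Induced subgraphs of maximum degree one *)

Section DegreeOneSets.
Variables (T : finType) (e : rel T) (S : {set T}).
Hypotheses (e_sym : symmetric e) (e_irr : irreflexive e)
  (S_deg : forall x, x \in S -> #|[set y in S | e x y]| <= 1).

Local Notation nbr x := [set y in S | e x y].

Lemma nbr_unique x y z : x \in S -> y \in nbr x -> z \in nbr x -> y = z.
Proof. by move=> /S_deg /card_le1_eqP nbr1 yN zN; apply: nbr1. Qed.

Lemma induced_rel_sym : symmetric (induced_rel e S).
Proof. by move=> a b; rewrite /induced_rel andbCA e_sym. Qed.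

Lemma induced_component_deg1 x : x \in S ->
  [set y in S | connect (induced_rel e S) x y] = x |: nbr x.
Proof.
move=> xS; have c_sym := sym_connect_sym induced_rel_sym.
have closed_nbr : closed (induced_rel e S) (x |: nbr x).
  apply: intro_closed => // a b /and3P [aS bS eab].
  rewrite !inE => /orP [/eqP ax | /andP [_ exa]]; first by rewrite bS -ax eab orbT.
  by rewrite (@nbr_unique a b x) ?eqxx // inE ?bS ?xS // e_sym.
apply/setP => z; rewrite inE; apply/andP/idP => [[_ /(closed_connect closed_nbr) <-] | ].
  exact: setU11.
rewrite !inE => /orP [/eqP -> | /andP [zS exz]]; first by rewrite xS connect0.
by rewrite zS connect1 // /induced_rel xS zS.
Qed.

Lemma partition_induced_components : partition (induced_components e S) S.
Proof.
apply: (@equivalence_partitionP _ (connect (induced_rel e S)) S) => x y z _ _ _.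
split; first exact: connect0.
by move=> cxy; apply: (same_connect (sym_connect_sym induced_rel_sym) cxy).
Qed.

Lemma induced_componentP C :
  C \in induced_components e S -> exists2 x, x \in S & C = x |: nbr x.
Proof. by case/imsetP => x xS ->; exists x; rewrite ?induced_component_deg1. Qed.

Lemma clique_collection_deg1 : clique_collection e S.
Proof.
apply/forall_inP => _ /induced_componentP [x xS ->].
apply/forall_inP => a; rewrite !inE => /orP [/eqP -> | /andP [aS exa]];
  apply/forall_inP => b; rewrite !inE => /orP [/eqP -> | /andP [bS exb]].
- by rewrite eqxx.
- by rewrite exb implybT.
- by rewrite e_sym exa implybT.
- by rewrite (@nbr_unique x a b) ?eqxx // inE ?aS ?bS.
Qed.

Local Open Scope ring_scope.

(* An isolated vertex has weight 1 - 1/2 and each vertex of an edge has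
   weight (1 - 1/4) / 2. *)
Lemma clique_weight_deg1 (R : realType) : clique_weight R e S =
  \sum_(x in S) ((if [exists y in S, e x y] then 3 else 4)%:R / 8%:R).
Proof.
rewrite /clique_weight (set_partition_big _ partition_induced_components).
apply: eq_bigr => _ /induced_componentP [x xS ->].
have := S_deg xS; rewrite leq_eqVlt ltnS leqn0 cards_eq0 => /orP [/cards1P [y Ny] | /eqP N0].
- have : y \in nbr x by rewrite Ny set11.
  rewrite inE => /andP [yS exy].
  have xy : x != y by apply: contraTneq exy => ->; rewrite e_irr.
  rewrite Ny big_setU1 ?inE //= big_set1 cardsU1 inE xy cards1.
  have -> : [exists z in S, e x z] by apply/existsP; exists y; rewrite yS exy.
  have -> : [exists z in S, e y z] by apply/existsP; exists x; rewrite xS e_sym exy.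
  by rewrite /=; field.
- rewrite N0 setU0 big_set1 cards1.
  have -> : [exists z in S, e x z] = false.
    by apply/existsP => -[y yN]; move/setP/(_ y): N0; rewrite !inE yN.
  by rewrite /=; field.
Qed.

End DegreeOneSets.

(** * Counting homomorphisms *)

Definition racg_homs (T : finType) (e : rel T) (n : nat) :=
  [set f : {ffun T -> {perm 'I_n}} |
      [forall v, (f v * f v == 1)%g] &&
      [forall v, forall w, e v w ==> (f v * f w == f w * f v)%g]].

Lemma card_finset (X : finType) : #|{set X}| = 2 ^ #|X|.
Proof. by rewrite -[LHS]cardsT -powersetT card_powerset cardsT. Qed.

Section Homomorphisms.
Variables (T : finType) (e : rel T) (r : T) (n : nat) (x0 : 'I_n).
Hypothesis e_conn : forall x y, connect e x y.

Local Notation parent := (parent e r).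
Local Notation nlight := (nlight e r).

Lemma racg_hom_inv f v : f \in racg_homs e n -> involutive (f v).
Proof.
rewrite inE => /andP [/forallP inv _] x.
by have := congr1 (fun p : {perm 'I_n} => p x) (eqP (inv v)); rewrite permM perm1.
Qed.

Lemma racg_hom_comm f v w : f \in racg_homs e n -> e v w ->
  forall x, f w (f v x) = f v (f w x).
Proof.
rewrite inE => /andP [_ /forallP comm] evw x.
have /eqP E := implyP (forallP (comm v) w) evw.
by have := congr1 (fun p : {perm 'I_n} => p x) E; rewrite !permM.
Qed.

Definition parent_perm (f : {ffun T -> {perm 'I_n}}) v : {perm 'I_n} :=
  if v == r then 1%g else f (parent v).

Lemma parent_perm_inv f v : f \in racg_homs e n -> involutive (parent_perm f v).
Proof. by move=> hf x; rewrite /parent_perm; case: ifP => _; rewrite ?perm1 ?racg_hom_inv. Qed.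

Lemma parent_perm_comm f v : f \in racg_homs e n ->
  forall x, f v (parent_perm f v x) = parent_perm f v (f v x).
Proof.
move=> hf x; rewrite /parent_perm; case: ifPn => vr; first by rewrite !perm1.
exact: (racg_hom_comm hf (parent_edge e_conn vr)).
Qed.

(* [f v] is decoded from the code and [parent_perm f v], i.e. from [f] at the
   parent of [v], so [f] is recovered from the root down. *)
Definition encode (f : {ffun T -> {perm 'I_n}}) :=
  ([set p : T * 'I_n | p.2 \in klein_reps (parent_perm f p.1) (f p.1)],
   [set p : T * 'I_n | p.2 \in agree_set (parent_perm f p.1) (f p.1)],
   [ffun p : T * 'I_n =>
      if p.2 \in klein_reps (parent_perm f p.1) (f p.1) then f p.1 p.2 else x0]).

Lemma encode_inj : {in racg_homs e n &, injective encode}.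
Proof.
move=> f f' hf hf' [E_reps E_agree E_val].
have decode v : parent_perm f v = parent_perm f' v -> f v = f' v.
  move=> Es.
  have ER : klein_reps (parent_perm f v) (f v) = klein_reps (parent_perm f' v) (f' v).
    by apply/setP => x; move/setP/(_ (v, x)): E_reps; rewrite !inE.
  have EA : agree_set (parent_perm f v) (f v) = agree_set (parent_perm f' v) (f' v).
    by apply/setP => x; move/setP/(_ (v, x)): E_agree; rewrite !inE.
  rewrite Es in ER EA.
  apply: (involution_eq_on_klein_reps (s := parent_perm f' v)) => //.
  - exact: parent_perm_inv.
  - exact: racg_hom_inv.
  - exact: racg_hom_inv.
  - by move=> x; rewrite -Es; apply: parent_perm_comm.
  - exact: parent_perm_comm.
  - move=> x xR; move/ffunP/(_ (v, x)): E_val; rewrite !ffunE /= Es xR.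
    by rewrite -ER xR.
apply/ffunP; elim/(root_ind (r := r) e_conn) => [|v vr IH]; apply: decode.
  by rewrite /parent_perm eqxx.
by rewrite /parent_perm (negbTE vr) IH.
Qed.

Definition rep_budget := (n * \sum_v (2 - nlight v)) %/ 4.

Lemma card_encode_reps f : f \in racg_homs e n -> #|(encode f).1.1| <= rep_budget.
Proof.
move=> hf; pose R v := klein_reps (parent_perm f v) (f v).
pose F v := fixed (parent_perm f v).
have -> : #|(encode f).1.1| = \sum_v (#|R v :&: F v| + #|R v :\: F v|).
  under eq_bigr do rewrite cardsID.
  exact: (card_sigma_set predT R).
rewrite leq_divRL // mulnC.
apply: (sum_le_deficit e_conn (m := fun v => #|~: fixed (f v)|)) => [v | v vr | |].
- by rewrite -[leqRHS](card_ord n) max_card.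
- have [] := card_klein_reps (parent_perm_inv v hf) (racg_hom_inv v hf) (parent_perm_comm v hf).
  rewrite /R /F /parent_perm (negbTE vr) => fixed_le moved_le moved_t_le; split=> //.
  by rewrite -[leqRHS](card_ord n) -(cardsC (fixed (f (parent v)))) leq_add2r.
- by rewrite /R /F /parent_perm eqxx fixed1 setDT cards0.
- have [_ _] := card_klein_reps (parent_perm_inv r hf) (racg_hom_inv r hf) (parent_perm_comm r hf).
  exact/leq_trans/leq_addr.
Qed.

Lemma card_racg_homs : #|racg_homs e n| <= 4 ^ (#|T| * n) * n ^ rep_budget.
Proof.
pose codes := [set c : {set T * 'I_n} * {set T * 'I_n} * {ffun T * 'I_n -> 'I_n} |
  (#|c.1.1| <= rep_budget) && (c.2 \in pffun_on x0 c.1.1 [set: 'I_n])].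
have encode_codes : encode @: racg_homs e n \subset codes.
  apply/subsetP => _ /imsetP [f hf ->]; rewrite inE card_encode_reps //=.
  apply/pffun_onP; split=> [|y _]; last by rewrite inE.
  apply/subsetP => p; rewrite inE ffunE.
  by case: ifP => [pR _ | _]; [rewrite in_set | rewrite eqxx].
have card_codes : #|codes| <= 4 ^ (#|T| * n) * n ^ rep_budget.
  have n_gt0 : 0 < n by case: (n) x0 => [[]|].
  have -> : #|codes| = \sum_a \sum_g (if (a, g) \in codes then 1 else 0).
    by rewrite -sum1_card pair_big big_mkcond; apply: eq_bigr => -[a g].
  apply: (@leq_trans (\sum_(a : {set T * 'I_n} * {set T * 'I_n}) n ^ rep_budget)).
    apply: leq_sum => a _; rewrite -big_mkcond.
    have [a_le | a_gt] := leqP #|a.1| rep_budget; last first.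
      by rewrite big_pred0 // => g; rewrite inE /= leqNgt a_gt.
    rewrite (eq_bigl (mem (pffun_on x0 a.1 [set: 'I_n]))) => [|g]; last by rewrite inE /= a_le.
    by rewrite sum1_card card_pffun_on cardsT card_ord leq_pexp2l.
  by rewrite sum_nat_const card_prod !card_finset card_prod card_ord -expnMn.
by rewrite -(card_in_imset encode_inj); apply: leq_trans (subset_leq_card encode_codes) card_codes.
Qed.

End Homomorphisms.

Local Open Scope ring_scope.

Lemma deficit_le_gamma (R : realType) (T : finType) (e : rel T) (r : T) :
  symmetric e -> irreflexive e -> (forall x y, connect e x y) -> acyclic_graph e ->
  ((\sum_v (2 - nlight e r v))%N%:R : R) <= 4 * gammaT R e.
Proof.
move=> e_sym e_irr e_conn e_acyc.
have S_deg := @chain_set_deg _ e r e_sym e_irr e_conn e_acyc.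
have weight_le : clique_weight R e (chain_set e r) <= gammaT R e.
  apply: le_bigmax_seq; first exact: mem_index_enum.
  exact: clique_collection_deg1.
have tokens_eq : ((\sum_v tokens e r v)%N%:R : R) = 8 * clique_weight R e (chain_set e r).
  rewrite (clique_weight_deg1 e_sym e_irr S_deg) mulr_sumr -big_mkcond natr_sum /=.
  by apply: eq_bigr => v _; rewrite mulrCA mulfV ?mulr1 // pnatr_eq0.
have := deficit_le_tokens r e_sym e_irr e_conn e_acyc.
rewrite -(ler_nat R) natrM tokens_eq; lra.
Qed.

Theorem mainTheorem8 (R : realType) (T : finType) (e : rel T) (n : nat) :
  is_tree e -> (1 <= n)%N ->
  ((hom_RACG_Sym e n)%:R : R) <=
    (n%:R ^+ (2 * #|T|)) * (4%:R ^+ (#|T| * n)) *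
    powR n%:R (gammaT R e * n%:R).
Proof.
case=> [[e_sym e_irr] /card_gt0P [r _] e_conn e_acyc] n_gt0.
have homs := card_racg_homs r (Ordinal n_gt0) e_conn.
set K := rep_budget e r n in homs.
have deficit := deficit_le_gamma R r e_sym e_irr e_conn e_acyc.
have K_le : K%:R <= gammaT R e * n%:R.
  have := leq_divM (n * \sum_v (2 - nlight e r v)) 4.
  rewrite -(ler_nat R) !natrM => K4; have : 0 <= n%:R :> R by []; nra.
have pow_le : n%:R ^+ K <= powR n%:R (gammaT R e * n%:R).
  by rewrite -powR_mulrn // ler_powR // ler1n.
have -> : hom_RACG_Sym e n = #|racg_homs e n| by [].
apply: (@le_trans _ _ (4%:R ^+ (#|T| * n) * powR n%:R (gammaT R e * n%:R))).
  apply: le_trans (_ : _ <= 4%:R ^+ (#|T| * n) * n%:R ^+ K) _.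
    by rewrite -!natrX -natrM ler_nat.
  by rewrite ler_wpM2l ?exprn_ge0.
by rewrite -mulrA ler_peMl ?mulr_ge0 ?exprn_ge0 ?powR_ge0 ?exprn_ege1 ?ler1n.
Qed.
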